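(* Let $k$ be a field of characteristic $p>0$, $M$ a lattice, $S\subset M$ a finitely generated subsemigroup containing $0$, $R=k[S]$, and $L$ the subgroup of $M$ generated by $S$. Fix $q=p^e$. Let $H\subset\frac1qL$ be a finitely generated $S$-module (i.e. $H+S\subset H$ and $H=\bigcup_{j}(h_j+S)$ for finitely many $h_j$), so that $k[H]\subset k[\frac1qL]$ is an $R$-module generated by monomials. Then the set of monomials of $k[H]$ which generate a free (graded) direct summand of $k[H]$ is $\{\chi^{\vec v}:\vec v\in H,\ \vec v+\vec k\notin H\text{ for all }\vec k\in L\setminus S\}$. Moreover, if $0$ is the only unit in $H$, then the free rank $a_e$ of $k[H]$ as an $R$-module equals the cardinality of this set.
   Context: $k[H]$ is the $k$-span of the monomials $\chi^{\vec v}$, $\vec v\in H$, with its natural $\frac1qL$-grading. The free rank is the number of copies of $R$ (up to shift) in a decomposition of $k[H]$ into graded indecomposable $R$-modules. *)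

From HB Require Import structures.
From mathcomp Require Import all_boot all_order all_algebra.
From mathcomp Require Import boolp.
Set Implicit Arguments. Unset Strict Implicit. Unset Printing Implicit Defensive.
Import Order.TTheory GRing.Theory Num.Theory.
Local Open Scope ring_scope.

(* Conventions: the lattice M is Z^n = 'rV[int]_n, embedded in Q^n = 'rV[rat]_n;
   (1/q)L is a subset of Q^n.  Elements of k[H] (and of k[(1/q)L]) are functions
   Q^n -> k with finite support (the coefficient of chi^w is f w). *)

Definition toQ (n : nat) (v : 'rV[int]_n) : 'rV[rat]_n :=
  map_mx (fun z : int => z%:~R) v.

Definition fg_monoid (n : nat) (S : 'rV[int]_n -> Prop) : Prop :=
  [/\ S 0, (forall x y, S x -> S y -> S (x + y)) &
   exists gens : seq 'rV[int]_n, (forall g, g \in gens -> S g) /\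
     forall v, S v -> exists c : 'I_(size gens) -> nat,
       v = \sum_(i < size gens) gens`_i *+ c i].

Definition gen_group (n : nat) (S : 'rV[int]_n -> Prop) (v : 'rV[int]_n) : Prop :=
  forall G : 'rV[int]_n -> Prop, G 0 -> (forall x y, G x -> G y -> G (x - y)) ->
    (forall s, S s -> G s) -> G v.

Definition frac_lattice (n q : nat) (S : 'rV[int]_n -> Prop) (w : 'rV[rat]_n) : Prop :=
  exists l, gen_group S l /\ w = (q%:R)^-1 *: toQ l.

Definition fg_module (n : nat) (S : 'rV[int]_n -> Prop) (H : 'rV[rat]_n -> Prop) : Prop :=
  (forall h s, H h -> S s -> H (h + toQ s)) /\
  exists hs : seq 'rV[rat]_n, forall v,
    H v <-> exists j s, [/\ (j < size hs)%N, S s & v = hs`_j + toQ s].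

Section Modules.
Variables (k : fieldType) (n : nat) (S : 'rV[int]_n -> Prop) (H : 'rV[rat]_n -> Prop).

Definition V := 'rV[rat]_n.

Definition kH (f : V -> k) : Prop :=
  (exists supp : seq V, forall v, f v != 0 -> v \in supp) /\
  (forall v, f v != 0 -> H v).

(* an element of R = k[S], given as a formal finite sum  sum c * chi^s, s in S *)
Definition Relt (r : seq (k * 'rV[int]_n)) : Prop := forall cs, cs \in r -> S cs.2.

Definition Rzero (r : seq (k * 'rV[int]_n)) : Prop :=
  forall s, \sum_(cs <- r | cs.2 == s) cs.1 = 0.

(* action of r in R on f in k[(1/q)L]: chi^s * chi^w = chi^(s+w) *)
Definition act (r : seq (k * 'rV[int]_n)) (f : V -> k) : V -> k :=
  fun w => \sum_(cs <- r) cs.1 * f (w - toQ cs.2).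

Definition mono (v : V) : V -> k := fun w => if w == v then 1 else 0.

Definition submodule (N : (V -> k) -> Prop) : Prop :=
  [/\ forall f, N f -> kH f,
      N (fun _ => 0),
      (forall f g, N f -> N g -> N (fun w => f w + g w)) &
      (forall r f, Relt r -> N f -> N (act r f))].

Definition graded_sub (N : (V -> k) -> Prop) : Prop :=
  submodule N /\ forall f d, N f -> N (fun w => if w == d then f d else 0).

Definition dsum2 (A B N : (V -> k) -> Prop) : Prop :=
  [/\ (forall f, A f -> N f), (forall f, B f -> N f),
      (forall f, N f -> exists a b, [/\ A a, B b & forall w, f w = a w + b w]) &
      (forall a b, A a -> B b -> (forall w, a w + b w = 0) ->
         forall w, a w = 0 /\ b w = 0)].

Definition dsum (m : nat) (Ns : 'I_m -> (V -> k) -> Prop) (N : (V -> k) -> Prop) : Prop :=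
  [/\ (forall i f, Ns i f -> N f),
      (forall f, N f -> exists fs : 'I_m -> V -> k,
          (forall i, Ns i (fs i)) /\ forall w, f w = \sum_(i < m) fs i w) &
      (forall fs : 'I_m -> V -> k, (forall i, Ns i (fs i)) ->
          (forall w, \sum_(i < m) fs i w = 0) -> forall i w, fs i w = 0)].

Definition zero_mod (N : (V -> k) -> Prop) : Prop := forall f, N f -> forall w, f w = 0.

Definition indecomposable (N : (V -> k) -> Prop) : Prop :=
  [/\ graded_sub N, ~ zero_mod N &
      forall A B, graded_sub A -> graded_sub B -> dsum2 A B N -> zero_mod A \/ zero_mod B].

Definition cyclic (g : V -> k) : (V -> k) -> Prop :=
  fun f => exists r, Relt r /\ forall w, f w = act r g w.

(* R -> R g, r |-> r g, is injective, i.e. R g is free with basis g *)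
Definition free_cyclic (g : V -> k) : Prop :=
  forall r, Relt r -> (forall w, act r g w = 0) -> Rzero r.

(* N is isomorphic, as a graded R-module, to a shift R(-d) of R
   (the isomorphism R(-d) -> N sends 1 to a homogeneous g of degree d) *)
Definition free_rank1 (N : (V -> k) -> Prop) : Prop :=
  exists (d : V) (g : V -> k), [/\ forall w, g w != 0 -> w = d,
     (forall f, N f <-> cyclic g f) & free_cyclic g].

Definition free_summand_mono (v : V) : Prop :=
  [/\ H v, free_cyclic (mono v) &
      exists C, graded_sub C /\ dsum2 (cyclic (mono v)) C kH].

Definition decomposition (m : nat) (Ns : 'I_m -> (V -> k) -> Prop) : Prop :=
  (forall i, indecomposable (Ns i)) /\ dsum Ns kH.

Definition nfree (m : nat) (Ns : 'I_m -> (V -> k) -> Prop) : nat :=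
  #|[set i : 'I_m | `[< free_rank1 (Ns i) >]]|.

End Modules.

From HB Require Import structures.
From mathcomp Require Import all_boot all_order all_algebra.
From mathcomp Require Import boolp.
Import GRing.Theory Num.Theory.
Local Open Scope ring_scope.
Set Implicit Arguments. Unset Strict Implicit.

(* A graded submodule of k[H] is spanned by the monomials it contains, so graded
   submodules are S-stable sets of degrees and graded direct sums are partitions of
   such sets.  Hence every graded indecomposable summand lives in a single coset
   v + L, and it is free of rank one exactly when its degrees form a translate v + S.
   The translate v + S splits off k[H] iff H meets v + L only inside v + S, i.e. iff
   v + l lies outside H for all l in L \ S.  When S is pointed the degree of a free
   generator is unique, which matches the free summands of any decomposition with
   these degrees. *)

Lemma toQD n (a b : 'rV[int]_n) : toQ (a + b) = toQ a + toQ b.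
Proof. by apply/matrixP => i j; rewrite !mxE intrD. Qed.

Lemma toQN n (a : 'rV[int]_n) : toQ (- a) = - toQ a.
Proof. by apply/matrixP => i j; rewrite !mxE intrN. Qed.

Lemma toQ0 n : toQ (0 : 'rV[int]_n) = 0.
Proof. by apply/matrixP => i j; rewrite !mxE. Qed.

Lemma toQB n (a b : 'rV[int]_n) : toQ (a - b) = toQ a - toQ b.
Proof. by rewrite toQD toQN. Qed.

Lemma toQ_inj n : injective (@toQ n).
Proof.
move=> a b /matrixP E; apply/matrixP => i j; move: (E i j); rewrite !mxE.
exact: intr_inj.
Qed.

Section Lattice.
Variables (n : nat) (S : 'rV[int]_n -> Prop).
Implicit Types (l s : 'rV[int]_n) (v w : V n).

Lemma gen_group0 : gen_group S 0.
Proof. by move=> G. Qed.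

Lemma gen_groupB l1 l2 : gen_group S l1 -> gen_group S l2 -> gen_group S (l1 - l2).
Proof. by move=> h1 h2 G G0 GB GS; apply: (GB); [exact: (h1 G) | exact: (h2 G)]. Qed.

Lemma gen_groupN l : gen_group S l -> gen_group S (- l).
Proof. by move=> hl; rewrite -sub0r; apply: gen_groupB => //; apply: gen_group0. Qed.

Lemma gen_groupD l1 l2 : gen_group S l1 -> gen_group S l2 -> gen_group S (l1 + l2).
Proof. by move=> h1 h2; rewrite -[l2]opprK; apply: gen_groupB => //; apply: gen_groupN. Qed.

Lemma gen_group_mem s : S s -> gen_group S s.
Proof. by move=> hs G _ _ GS; apply: GS. Qed.

Definition same_coset v w := exists l, gen_group S l /\ w = v + toQ l.

Definition shifted v w := exists s, S s /\ w = v + toQ s.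

Lemma same_coset_refl v : same_coset v v.
Proof. by exists 0; split; [apply: gen_group0 | rewrite toQ0 addr0]. Qed.

Lemma same_coset_sym v w : same_coset v w -> same_coset w v.
Proof. by case=> l [hl ->]; exists (- l); split; [apply: gen_groupN | rewrite toQN addrK]. Qed.

Lemma same_coset_trans u v w : same_coset u v -> same_coset v w -> same_coset u w.
Proof.
case=> l1 [h1 ->] [l2 [h2 ->]]; exists (l1 + l2).
by split; [apply: gen_groupD | rewrite toQD addrA].
Qed.

Lemma same_coset_addS v s : S s -> same_coset v (v + toQ s).
Proof. by move=> hs; exists s; split => //; apply: gen_group_mem. Qed.

Section Monoid.
Hypotheses (S0 : S 0) (SD : forall s1 s2, S s1 -> S s2 -> S (s1 + s2)).

Lemma gen_group_subS l : gen_group S l -> exists s1 s2, [/\ S s1, S s2 & l = s1 - s2].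
Proof.
move=> hl; apply: (hl (fun l => exists s1 s2, [/\ S s1, S s2 & l = s1 - s2])).
- by exists 0, 0; rewrite subr0.
- move=> _ _ [a1 [a2 [h1 h2 ->]]] [b1 [b2 [g1 g2 ->]]].
  exists (a1 + b2), (a2 + b1); split; try exact: SD.
  by rewrite opprB opprD !addrA; congr (_ - _); rewrite addrAC -!addrA [b2 + _]addrC.
- by move=> s hs; exists s, 0; rewrite subr0.
Qed.

Lemma same_coset_meet v w : same_coset v w ->
  exists s1 s2, [/\ S s1, S s2 & v + toQ s1 = w + toQ s2].
Proof.
case=> l [/gen_group_subS [s1 [s2 [h1 h2 ->]]] ->].
by exists s1, s2; split => //; rewrite toQB -addrA subrK.
Qed.

End Monoid.

Lemma shifted_antisym v w : (forall s, S s -> S (- s) -> s = 0) ->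
  shifted v w -> shifted w v -> v = w.
Proof.
move=> pointed [s [hs ew]] [s' [hs' ev]].
have ss' : s + s' = 0.
  by apply: toQ_inj; rewrite toQD toQ0; apply: (addrI v); rewrite addr0 addrA -ew -ev.
have s0 : s = 0.
  by apply: pointed => //; have -> : - s = s' by rewrite -[s'](addKr s) ss' addr0.
by rewrite ew s0 toQ0 addr0.
Qed.

Fixpoint coset_reps (hs : seq (V n)) : seq (V n) :=
  if hs is x :: t then x :: [seq y <- coset_reps t | ~~ `[< same_coset x y >]] else [::].

Lemma coset_reps_sub hs y : y \in coset_reps hs -> y \in hs.
Proof.
elim: hs => [|x t IH] //=; rewrite !inE => /orP [->//|].
by rewrite mem_filter => /andP [_ /IH ->]; rewrite orbT.
Qed.

Lemma coset_reps_cover hs y : y \in hs -> exists2 z, z \in coset_reps hs & same_coset z y.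
Proof.
elim: hs => [|x t IH] //=; rewrite inE => /orP [/eqP ->|].
  by exists x; [rewrite inE eqxx | apply: same_coset_refl].
move=> /IH [z hz hzy]; have [hx|hx] := pselect (same_coset x z).
  by exists x; [rewrite inE eqxx | apply: same_coset_trans hzy].
by exists z => //; rewrite inE mem_filter hz andbT; apply/orP; right; apply/negP => /asboolP.
Qed.

Lemma coset_reps_inj hs x y : x \in coset_reps hs -> y \in coset_reps hs ->
  same_coset x y -> x = y.
Proof.
elim: hs => [|a t IH] //=; rewrite !inE.
move=> /orP [/eqP ->|hx] /orP [/eqP ->|hy] // hc.
- by move: hy; rewrite mem_filter => /andP [/negP []]; apply/asboolP.
- by move: hx; rewrite mem_filter => /andP [/negP []]; apply/asboolP; apply: same_coset_sym.
- by move: hx hy; rewrite !mem_filter => /andP [_ hx] /andP [_ hy]; apply: IH.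
Qed.

Lemma coset_reps_uniq hs : uniq (coset_reps hs).
Proof.
elim: hs => [|a t IH] //=; rewrite filter_uniq // andbT mem_filter negb_and.
by rewrite negbK (asboolT (same_coset_refl a)).
Qed.

Definition free_degree (H : V n -> Prop) v :=
  H v /\ forall l, gen_group S l -> ~ S l -> ~ H (v + toQ l).

Lemma free_degree_shifted H v w :
  free_degree H v -> H w -> same_coset v w -> shifted v w.
Proof.
move=> [_ hv] hw [l [hl ew]]; have [hs|hs] := pselect (S l); first by exists l.
by case: (hv l hl hs); rewrite -ew.
Qed.

Lemma free_degree_mem_generators H (hs : seq (V n)) v : S 0 ->
  (forall s, S s -> S (- s) -> s = 0) ->
  (forall v, H v <-> exists j s, [/\ (j < size hs)%N, S s & v = hs`_j + toQ s]) ->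
  free_degree H v -> v \in hs.
Proof.
move=> S0 pointed hspec hv; have [j [s [hj hs' ev]]] := (hspec v).1 hv.1.
have hH : H hs`_j by apply/hspec; exists j, 0; split => //; rewrite toQ0 addr0.
suff -> : v = hs`_j by apply: mem_nth.
apply: shifted_antisym pointed _ _; last by exists s.
apply: free_degree_shifted hv hH _; apply: same_coset_sym.
by rewrite ev; apply: same_coset_addS.
Qed.

End Lattice.

Lemma sumr_nonzero_term (R : nmodType) (I : eqType) (r : seq I) (F : I -> R) :
  \sum_(x <- r) F x != 0 -> exists2 x, x \in r & F x != 0.
Proof.
move=> /eqP hsum; apply: contrapT => hF; apply: hsum; rewrite big_seq_cond big1 // => x /andP [hx _].
by apply: contrapT => /eqP hx0; apply: hF; exists x.
Qed.

Lemma Relt_seq1 (k : fieldType) n (S : 'rV[int]_n -> Prop) (c : k) s : S s -> Relt S [:: (c, s)].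
Proof. by move=> hs cs; rewrite inE => /eqP ->. Qed.
Arguments Relt_seq1 {k n S} c {s}.

Section Monomials.
Variables (k : fieldType) (n : nat).
Implicit Types (v w a d : V n) (f : V n -> k) (r : seq (k * 'rV[int]_n)).

Lemma mono_id v : mono k v v = 1.
Proof. by rewrite /mono eqxx. Qed.

Lemma mono_neq0 v w : mono k v w != 0 -> w = v.
Proof. by rewrite /mono; case: (w =P v) => // _; rewrite eqxx. Qed.

Lemma mono_shift v a w : mono k v (w - a) = mono k (v + a) w.
Proof. by rewrite /mono subr_eq. Qed.

Lemma kH_mono (H : V n -> Prop) v : H v -> kH H (mono k v).
Proof. by move=> hv; split=> [|w /mono_neq0 -> //]; exists [:: v] => w /mono_neq0 ->; rewrite inE. Qed.

Lemma act_seq1 (c : k) s f : act [:: (c, s)] f = fun w => c * f (w - toQ s).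
Proof. by apply: funext => w; rewrite /act big_seq1. Qed.

Lemma act_neq0 r f w : act r f w != 0 -> exists2 cs, cs \in r & f (w - toQ cs.2) != 0.
Proof. by move=> /sumr_nonzero_term [cs hcs]; rewrite mulf_eq0 negb_or => /andP [_ hf]; exists cs. Qed.

Lemma mem_span_monos (H : V n -> Prop) (N : (V n -> k) -> Prop) f :
  N (fun _ => 0) -> (forall f g, N f -> N g -> N (fun w => f w + g w)) ->
  (forall c f, N f -> N (fun w => c * f w)) -> kH H f ->
  (forall d, f d != 0 -> N (mono k d)) -> N f.
Proof.
move=> N0 ND NZ [[sp hsp] _] hmono.
pose supp := [seq d <- undup sp | f d != 0].
have span_supp : forall s, (forall d, d \in s -> N (mono k d)) ->
    N (fun w => \sum_(d <- s) f d * mono k d w).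
  elim=> [|d s IH] hs.
    by under [fun w => _]funext => w do rewrite big_nil.
  under [fun w => _]funext => w do rewrite big_cons.
  apply: ND; first by apply: NZ; apply: hs; rewrite inE eqxx.
  by apply: IH => d' hd'; apply: hs; rewrite inE hd' orbT.
have -> : f = (fun w => \sum_(d <- supp) f d * mono k d w).
  apply: funext => w; have [hw|hw] := eqVneq (f w) 0.
    rewrite hw big1_seq // => d /andP [_ hd].
    by rewrite /mono; case: (w =P d) => [<-|_]; rewrite ?hw ?mul0r ?mulr0.
  have wsupp : w \in supp by rewrite mem_filter hw mem_undup hsp.
  rewrite (bigD1_seq w) //= ?filter_uniq ?undup_uniq // mono_id mulr1 big1 ?addr0 // => d hd.
  by rewrite /mono eq_sym (negbTE hd) mulr0.
by apply: span_supp => d; rewrite mem_filter => /andP [/hmono].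
Qed.

End Monomials.

Section GradedSubmodules.
Variables (k : fieldType) (n : nat) (S : 'rV[int]_n -> Prop) (H : V n -> Prop).
Hypotheses (S0 : S 0) (SD : forall s1 s2, S s1 -> S s2 -> S (s1 + s2)).
Hypothesis H_shift : forall h s, H h -> S s -> H (h + toQ s).
Implicit Types (N A B C : (V n -> k) -> Prop) (f g : V n -> k) (v w d : V n).

Lemma kH_act r f : Relt S r -> kH H f -> kH H (act r f).
Proof.
move=> hr [[sp hsp] hfH]; split.
  exists [seq w + toQ cs.2 | w <- sp, cs <- r] => w /act_neq0 [cs hcs /hsp hw].
  by have := allpairs_f (fun w (cs : k * 'rV[int]_n) => w + toQ cs.2) hw hcs; rewrite /= subrK.
move=> w /act_neq0 [cs hcs /hfH hw].
by rewrite -(subrK (toQ cs.2) w); apply: H_shift hw (hr _ hcs).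
Qed.

Lemma kH_graded : graded_sub S H (@kH k n H).
Proof.
split; first split.
- by [].
- by split; [exists [::] | move=> w]; rewrite eqxx.
- move=> f g [[sf hsf] hf] [[sg hsg] hg]; split.
    exists (sf ++ sg) => w hw; rewrite mem_cat.
    have [f0|f0] := eqVneq (f w) 0; last by rewrite hsf.
    by rewrite hsg ?orbT //; move: hw; rewrite f0 add0r.
  move=> w hw; have [f0|f0] := eqVneq (f w) 0; last exact: hf.
  by apply: hg; move: hw; rewrite f0 add0r.
- exact: kH_act.
- move=> f d [_ hf]; split.
    by exists [:: d] => w; case: (w =P d) => [->|_]; rewrite ?inE ?eqxx.
  by move=> w; case: (w =P d) => [->|_]; [apply: hf | rewrite eqxx].
Qed.

Section OneGradedSubmodule.
Variable N : (V n -> k) -> Prop.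
Hypothesis gN : graded_sub S H N.

Lemma graded_sub_kH f : N f -> kH H f.
Proof. by case: gN => [[NkH _ _ _] _]; apply: NkH. Qed.

Lemma graded_sub0 : N (fun _ => 0).
Proof. by case: gN => [[]]. Qed.

Lemma graded_subD f g : N f -> N g -> N (fun w => f w + g w).
Proof. by case: gN => [[_ _ ND _] _]; apply: ND. Qed.

Lemma graded_sub_act r f : Relt S r -> N f -> N (act r f).
Proof. by case: gN => [[_ _ _ Nact] _]; apply: Nact. Qed.

Lemma graded_subZ c f : N f -> N (fun w => c * f w).
Proof.
move=> hf; have := graded_sub_act (Relt_seq1 c S0) hf.
by rewrite act_seq1 toQ0; under [fun w => _]funext => w do rewrite subr0.
Qed.

Lemma graded_sub_mono f d : N f -> f d != 0 -> N (mono k d).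
Proof.
move=> hf hd; have := graded_subZ (f d)^-1 (gN.2 f d hf).
congr N; apply: funext => w; rewrite /mono.
by case: (w =P d) => _; rewrite ?mulVf ?mulr0.
Qed.

Lemma graded_sub_mono_shift d s : N (mono k d) -> S s -> N (mono k (d + toQ s)).
Proof.
move=> hd hs; have := graded_sub_act (Relt_seq1 1 hs) hd.
by rewrite act_seq1; under [fun w => _]funext => w do rewrite mul1r mono_shift.
Qed.

Lemma graded_sub_of_monos f : kH H f -> (forall d, f d != 0 -> N (mono k d)) -> N f.
Proof.
apply: mem_span_monos graded_sub0 _ _ => [f1 g1|c g]; [exact: graded_subD | exact: graded_subZ].
Qed.

Lemma graded_sub_monoH d : N (mono k d) -> H d.
Proof. by move=> /graded_sub_kH [_]; apply; rewrite mono_id oner_eq0. Qed.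

End OneGradedSubmodule.

Definition restrict N (P : V n -> Prop) f := N f /\ forall w, f w != 0 -> P w.

Lemma restrict_graded N (P : V n -> Prop) : graded_sub S H N ->
  (forall w s, S s -> H w -> P w -> P (w + toQ s)) -> graded_sub S H (restrict N P).
Proof.
move=> gN hP; split; first split.
- by move=> f [/(graded_sub_kH gN)].
- by split; [exact: graded_sub0 gN | move=> w; rewrite eqxx].
- move=> f g [hf pf] [hg pg]; split; first exact: graded_subD.
  move=> w hw; have [f0|f0] := eqVneq (f w) 0; last exact: pf.
  by apply: pg; move: hw; rewrite f0 add0r.
- move=> r f hr [hf pf]; split; first exact: graded_sub_act.
  move=> w /act_neq0 [cs hcs hfw]; rewrite -(subrK (toQ cs.2) w).
  apply: hP (hr _ hcs) _ (pf _ hfw).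
  by case: (graded_sub_kH gN hf) => _; apply.
- move=> f d [hf pf]; split; first exact: gN.2.
  by move=> w; case: (w =P d) => [->|_]; [apply: pf | rewrite eqxx].
Qed.

Lemma restrict_dsum2 N (P : V n -> Prop) : graded_sub S H N ->
  dsum2 (restrict N P) (restrict N (fun w => ~ P w)) N.
Proof.
move=> gN; pose part (b : bool) f w := if `[< P w >] == b then f w else 0.
have partN b f : N f -> N (part b f).
  move=> hf; apply: (graded_sub_of_monos gN).
    case: (graded_sub_kH gN hf) => [[sp hsp] hH]; rewrite /part; split.
      by exists sp => w; case: ifP => _; [apply: hsp | rewrite eqxx].
    by move=> w; case: ifP => _; [apply: hH | rewrite eqxx].
  by move=> d; rewrite /part; case: ifP => _ hd; [apply: graded_sub_mono hd | rewrite eqxx in hd].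
split.
- by move=> f [].
- by move=> f [].
- move=> f hf; exists (part true f), (part false f); split.
  + by split; [exact: partN | move=> w; rewrite /part; case: ifP => [/eqP/asboolP|_] //; rewrite eqxx].
  + by split; [exact: partN | move=> w; rewrite /part; case: ifP => [/eqP/asboolP|_] //; rewrite eqxx].
  + by move=> w; rewrite /part; case: (asboolP (P w)) => _ /=; rewrite ?addr0 ?add0r.
- move=> a b [_ pa] [_ pb] E w.
  have [hp|hp] := pselect (P w).
    have b0 : b w = 0 by apply: contrapT => /eqP /pb.
    by move: (E w); rewrite b0 addr0.
  have a0 : a w = 0 by apply: contrapT => /eqP /pa.
  by move: (E w); rewrite a0 add0r.
Qed.

Lemma eq_dsum2l A A' B N : (forall f, A f <-> A' f) -> dsum2 A' B N -> dsum2 A B N.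
Proof.
move=> eqA [h1 h2 h3 h4]; split.
- by move=> f /eqA; apply: h1.
- exact: h2.
- by move=> f /h3 [a [b [ha hb E]]]; exists a, b; split => //; apply/eqA.
- by move=> a b /eqA; apply: h4.
Qed.

Lemma dsum2_mono_disjoint A B N w : graded_sub S H B -> dsum2 A B N ->
  A (mono k w) -> B (mono k w) -> False.
Proof.
move=> gB [_ _ _ indep] hA hB.
have /(indep _ _ hA (graded_subZ gB (-1) hB)) : forall x, mono k w x + -1 * mono k w x = 0.
  by move=> x; rewrite mulN1r subrr.
by move=> /(_ w) [/eqP]; rewrite mono_id oner_eq0.
Qed.

Lemma cyclic_mono_shift v s : S s -> cyclic S (mono k v) (mono k (v + toQ s)).
Proof.
by move=> hs; exists [:: (1, s)]; split; [apply: Relt_seq1 | move=> w; rewrite act_seq1 mul1r mono_shift].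
Qed.

Lemma cyclic_monoP v f : H v ->
  cyclic S (mono k v) f <-> restrict (@kH k n H) (shifted S v) f.
Proof.
move=> hv; split.
  case=> r [hr E]; have -> : f = act r (mono k v) by apply: funext.
  split; first exact: kH_act hr (kH_mono k hv).
  move=> w /act_neq0 [cs hcs /mono_neq0 hw].
  by exists cs.2; split; [apply: hr | rewrite -hw subrK].
case=> hf hsupp; apply: (mem_span_monos _ _ _ hf).
- by exists [::]; split => // w; rewrite /act big_nil.
- move=> f1 g1 [r1 [h1 E1]] [r2 [h2 E2]]; exists (r1 ++ r2); split.
    by move=> cs; rewrite mem_cat => /orP [] ?; [apply: h1 | apply: h2].
  by move=> w; rewrite E1 E2 /act big_cat.
- move=> c g [r [hr E]]; exists [seq (c * cs.1, cs.2) | cs <- r]; split.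
    by move=> cs /mapP [cs' hcs' ->]; exact: hr cs' hcs'.
  by move=> w; rewrite /act big_map E /act mulr_sumr; apply: eq_bigr => cs _; rewrite mulrA.
- by move=> d /hsupp [s [hs ->]]; apply: cyclic_mono_shift.
Qed.

Lemma free_cyclic_mono v : free_cyclic S (mono k v).
Proof.
move=> r hr E s; transitivity (act r (mono k v) (v + toQ s)); last exact: E.
rewrite big_mkcond /act; apply: eq_bigr => cs _.
rewrite /mono subr_eq (inj_eq (addrI v)) (inj_eq (@toQ_inj n)) eq_sym.
by case: ifP; rewrite ?mulr1 ?mulr0.
Qed.

(* The complement of the free summand R chi^v is spanned by the monomials outside v + S. *)
Lemma free_summand_monoP v : @free_summand_mono k n S H v <-> free_degree S H v.
Proof.
split.
  case=> hv _ [C [gC hds]]; split => // l hl hSl hvl.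
  have [s1 [s2 [h1 h2 el]]] := gen_group_subS S0 SD hl.
  have [_ _ hcover _] := hds.
  have [a [c [ha hc E]]] := hcover _ (kH_mono k hvl).
  have a0 : a (v + toQ l) = 0.
    apply: contrapT => /eqP; case: ((cyclic_monoP a hv).1 ha) => _ hsupp.
    by move=> /hsupp [s [hs /addrI /toQ_inj el']]; apply: hSl; rewrite el'.
  have hCl : C (mono k (v + toQ l)).
    apply: (graded_sub_mono gC hc); move: (E (v + toQ l)).
    by rewrite a0 add0r mono_id => <-; rewrite oner_eq0.
  have := graded_sub_mono_shift gC hCl h2; rewrite -addrA -toQD el subrK => hC1.
  exact: dsum2_mono_disjoint gC hds (cyclic_mono_shift v h1) hC1.
move=> hfree; split; [exact: hfree.1 | exact: free_cyclic_mono |].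
exists (restrict (@kH k n H) (fun w => ~ shifted S v w)); split.
  apply: restrict_graded kH_graded _ => w s hs hw hnv [s' [hs' ew]]; apply: hnv.
  apply: free_degree_shifted hfree hw _.
  by exists (s' - s); split; [apply: gen_groupB; apply: gen_group_mem | rewrite toQB addrA -ew addrK].
apply: (eq_dsum2l (fun f => cyclic_monoP f hfree.1)).
exact: restrict_dsum2 kH_graded.
Qed.

Lemma indecomposable_graded N : indecomposable S H N -> graded_sub S H N.
Proof. by case. Qed.

Lemma indecomposable_same_coset N d w : indecomposable S H N ->
  N (mono k d) -> N (mono k w) -> same_coset S d w.
Proof.
move=> [gN _ split_trivial] hd hw; apply: contrapT => hdw.
have gA : graded_sub S H (restrict N (same_coset S d)).
  by apply: restrict_graded gN _ => x s hs _ hx; apply: same_coset_trans hx (same_coset_addS _ hs).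
have gB : graded_sub S H (restrict N (fun x => ~ same_coset S d x)).
  apply: restrict_graded gN _ => x s hs _ hx hxs; apply: hx.
  apply: same_coset_trans hxs _; exists (- s).
  by split; [apply: gen_groupN; apply: gen_group_mem | rewrite toQN addrK].
have [zA|zB] := split_trivial _ _ gA gB (restrict_dsum2 _ gN).
  have hA : restrict N (same_coset S d) (mono k d).
    by split => // x /mono_neq0 ->; apply: same_coset_refl.
  by move: (zA _ hA d); rewrite mono_id => /eqP; rewrite oner_eq0.
have hB : restrict N (fun x => ~ same_coset S d x) (mono k w) by split => // x /mono_neq0 ->.
by move: (zB _ hB w); rewrite mono_id => /eqP; rewrite oner_eq0.
Qed.

Lemma indecomposable_free_degree_shifted N v w : indecomposable S H N ->
  N (mono k v) -> free_degree S H v -> N (mono k w) -> shifted S v w.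
Proof.
move=> hN hv hfree hw; apply: free_degree_shifted hfree _ (indecomposable_same_coset hN hv hw).
exact: (graded_sub_monoH (indecomposable_graded hN) hw).
Qed.

Lemma free_rank1_of_free_degree N v : indecomposable S H N ->
  N (mono k v) -> free_degree S H v -> free_rank1 S N.
Proof.
move=> hN hv hfree; have gN := indecomposable_graded hN; exists v, (mono k v); split.
- by move=> w /mono_neq0.
- move=> f; rewrite (cyclic_monoP f hfree.1); split.
    move=> hf; split; first exact: (graded_sub_kH gN hf).
    move=> w /(graded_sub_mono gN hf); exact: indecomposable_free_degree_shifted.
  case=> hf hsupp; apply: (graded_sub_of_monos gN hf) => d /hsupp [s [hs ->]].
  exact: (graded_sub_mono_shift gN hv hs).
- exact: free_cyclic_mono.
Qed.

Lemma free_rank1_generator N : graded_sub S H N -> free_rank1 S N ->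
  exists d, N (mono k d) /\ forall w, N (mono k w) -> shifted S d w.
Proof.
move=> gN [d [g [g_deg hN g_free]]].
have g0 x : x != d -> g x = 0 by move=> hx; apply: contrapT => /eqP /g_deg /eqP; apply/negP.
have gd : g d != 0.
  apply/eqP => gd0; have gz x : g x = 0 by case: (x =P d) => [->//|/eqP]; apply: g0.
  have act0 w : act [:: (1, 0)] g w = 0 by rewrite act_seq1 gz mulr0.
  have := g_free _ (Relt_seq1 1 S0) act0 0.
  by rewrite /Rzero big_mkcond big_seq1 /= eqxx => /eqP; rewrite oner_eq0.
exists d; split.
  apply/hN; exists [:: ((g d)^-1, 0)]; split; first exact: Relt_seq1.
  move=> w; rewrite act_seq1 toQ0 subr0 /mono; case: (w =P d) => [->|/eqP hw].
    by rewrite mulVf.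
  by rewrite (g0 w hw) mulr0.
move=> w /hN [r [hr E]]; have : act r g w != 0 by rewrite -E mono_id oner_eq0.
by move=> /act_neq0 [cs hcs /g_deg hw]; exists cs.2; split; [apply: hr | rewrite -hw subrK].
Qed.

Lemma coset_piece_indecomposable v : H v ->
  indecomposable S H (restrict (@kH k n H) (same_coset S v)).
Proof.
move=> hv; have gP : graded_sub S H (restrict (@kH k n H) (same_coset S v)).
  by apply: restrict_graded kH_graded _ => x s hs _ hx; apply: same_coset_trans hx (same_coset_addS _ hs).
split=> //.
  move=> z; have hm : restrict (@kH k n H) (same_coset S v) (mono k v).
    by split; [exact: kH_mono | move=> x /mono_neq0 ->; apply: same_coset_refl].
  by move: (z _ hm v); rewrite mono_id => /eqP; rewrite oner_eq0.
move=> A B gA gB hAB; have [zA|nzA] := pselect (zero_mod A); first by left.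
right => f hf w; apply: contrapT => /eqP hfw.
have [g [x [hg hgx]]] : exists g x, A g /\ g x != 0.
  apply: contrapT => hn; apply: nzA => g hg x; apply: contrapT => /eqP hgx.
  by apply: hn; exists g, x.
have mA := graded_sub_mono gA hg hgx; have mB := graded_sub_mono gB hf hfw.
have [inA inB _ _] := hAB.
have cx : same_coset S v x by case: (inA _ mA) => _; apply; rewrite mono_id oner_eq0.
have cw : same_coset S v w by case: (inB _ mB) => _; apply; rewrite mono_id oner_eq0.
have [s1 [s2 [h1 h2 e]]] := same_coset_meet S0 SD (same_coset_trans (same_coset_sym cx) cw).
have mA' := graded_sub_mono_shift gA mA h1; rewrite e in mA'.
exact: dsum2_mono_disjoint gB hAB mA' (graded_sub_mono_shift gB mB h2).
Qed.

Lemma dsum_coset_pieces (reps : seq (V n)) : uniq reps ->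
  (forall x y, x \in reps -> y \in reps -> same_coset S x y -> x = y) ->
  (forall w, H w -> exists2 z, z \in reps & same_coset S z w) ->
  dsum (fun i : 'I_(size reps) => restrict (@kH k n H) (same_coset S reps`_i)) (@kH k n H).
Proof.
move=> ureps reps_inj reps_cover.
have piece_inj (i j : 'I_(size reps)) w :
    same_coset S reps`_i w -> same_coset S reps`_j w -> i = j.
  move=> hi hj; apply/val_inj/eqP; rewrite -(nth_uniq 0 (ltn_ord i) (ltn_ord j) ureps).
  apply/eqP/reps_inj; try exact: mem_nth.
  exact: same_coset_trans hi (same_coset_sym hj).
split.
- by move=> i f [].
- move=> f hf; exists (fun i w => if `[< same_coset S reps`_i w >] then f w else 0); split.
    move=> i; case: (hf) => [[sp hsp] hH]; split; first split.
    + by exists sp => w; case: ifP => _; [apply: hsp | rewrite eqxx].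
    + by move=> w; case: ifP => _; [apply: hH | rewrite eqxx].
    + by move=> w; case: ifP => [/asboolP //|_]; rewrite eqxx.
  move=> w; have [f0|f0] := eqVneq (f w) 0.
    by rewrite f0 big1 // => i _; case: ifP.
  have [z hz hzw] := reps_cover w (hf.2 w f0).
  have hi0 : (index z reps < size reps)%N by rewrite index_mem.
  have ei0 : reps`_(Ordinal hi0) = z by rewrite /= nth_index.
  rewrite (bigD1 (Ordinal hi0)) //= ei0 (asboolT hzw) big1 ?addr0 // => i hi.
  case: ifP => // /asboolP hc; move/negP: hi; case; apply/eqP.
  by apply: piece_inj hc _; rewrite ei0.
- move=> fs hfs E i w; apply: contrapT => /eqP hfw.
  have ci : same_coset S reps`_i w by case: (hfs i) => _; apply.
  move: (E w); rewrite (bigD1 i) //= big1 ?addr0; first by move/eqP; rewrite (negbTE hfw).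
  move=> j hj; apply: contrapT => /eqP hfj.
  have cj : same_coset S reps`_j w by case: (hfs j) => _; apply.
  by move/negP: hj; case; apply/eqP; apply: piece_inj cj ci.
Qed.

Lemma exists_decomposition (hs : seq (V n)) :
  (forall v, H v <-> exists j s, [/\ (j < size hs)%N, S s & v = hs`_j + toQ s]) ->
  exists m (Ns : 'I_m -> (V n -> k) -> Prop), decomposition S H Ns.
Proof.
move=> hspec; have gensH y : y \in hs -> H y.
  move=> hy; apply/hspec; exists (index y hs), 0; split => //; first by rewrite index_mem.
  by rewrite toQ0 addr0 nth_index.
pose reps := coset_reps S hs.
exists (size reps), (fun i => restrict (@kH k n H) (same_coset S reps`_i)); split.
  by move=> i; apply/coset_piece_indecomposable/gensH/(@coset_reps_sub _ S)/mem_nth.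
apply: dsum_coset_pieces (coset_reps_uniq _ _) _ _; first exact: coset_reps_inj.
move=> w /hspec [j [s [hj hs' ->]]]; have [z hz hzc] := coset_reps_cover S (mem_nth 0 hj).
by exists z => //; apply: same_coset_trans hzc (same_coset_addS _ hs').
Qed.

Section Decomposition.
Variables (m : nat) (Ns : 'I_m -> (V n -> k) -> Prop).
Hypothesis dec : decomposition S H Ns.

Lemma decomposition_indecomposable i : indecomposable S H (Ns i).
Proof. by case: dec. Qed.

Lemma decomposition_graded i : graded_sub S H (Ns i).
Proof. exact: indecomposable_graded (decomposition_indecomposable i). Qed.

Lemma decomposition_cover w : H w -> exists i, Ns i (mono k w).
Proof.
move=> hw; case: dec => _ [_ hsplit _]; have [fs [hfs E]] := hsplit _ (kH_mono k hw).
have /sumr_nonzero_term [i _ hi] : \sum_(i < m) fs i w != 0 by rewrite -E mono_id oner_eq0.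
by exists i; exact: (graded_sub_mono (decomposition_graded i) (hfs i) hi).
Qed.

Lemma decomposition_unique i j w : Ns i (mono k w) -> Ns j (mono k w) -> i = j.
Proof.
move=> hi hj; apply: contrapT => /eqP neq_ij; case: dec => _ [_ _ indep].
pose fs x : V n -> k := if x == i then mono k w
  else if x == j then (fun y => -1 * mono k w y) else (fun _ => 0).
have hfs x : Ns x (fs x).
  rewrite /fs; case: (x =P i) => [->//|_]; case: (x =P j) => [->|_].
    exact: (graded_subZ (decomposition_graded j) _ hj).
  exact: (graded_sub0 (decomposition_graded x)).
have sum0 y : \sum_(x < m) fs x y = 0.
  rewrite (bigD1 i) // (bigD1 j) /=; last by rewrite eq_sym.
  rewrite /fs eqxx [j == i]eq_sym (negbTE neq_ij) eqxx big1 ?addr0.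
    by rewrite mulN1r subrr.
  by move=> x /andP [/negbTE -> /negbTE ->].
by move: (indep fs hfs sum0 i w); rewrite /fs eqxx mono_id => /eqP; rewrite oner_eq0.
Qed.

Lemma decomposition_same_coset i d w :
  Ns i (mono k d) -> H w -> same_coset S d w -> Ns i (mono k w).
Proof.
move=> hd hw hdw; have [j hj] := decomposition_cover hw.
have [s1 [s2 [h1 h2 e]]] := same_coset_meet S0 SD hdw.
have hi' := graded_sub_mono_shift (decomposition_graded i) hd h1; rewrite e in hi'.
by rewrite (decomposition_unique hi' (graded_sub_mono_shift (decomposition_graded j) hj h2)).
Qed.

Lemma free_degree_of_generator i d : Ns i (mono k d) ->
  (forall w, Ns i (mono k w) -> shifted S d w) -> free_degree S H d.
Proof.
move=> hd hgen; split; first exact: (graded_sub_monoH (decomposition_graded i) hd).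
move=> l hl hSl hdl; have hsame : same_coset S d (d + toQ l) by exists l.
have [s [hs /addrI /toQ_inj el]] := hgen _ (decomposition_same_coset hd hdl hsame).
by apply: hSl; rewrite el.
Qed.

Lemma nfree_decomposition (mons : seq (V n)) : (forall s, S s -> S (- s) -> s = 0) ->
  uniq mons -> (forall v, v \in mons <-> free_degree S H v) -> nfree S Ns = size mons.
Proof.
move=> pointed umons hmons; pose F := [set i : 'I_m | `[< free_rank1 S (Ns i) >]].
have gen i : exists d, i \in F -> Ns i (mono k d) /\ forall w, Ns i (mono k w) -> shifted S d w.
  have [hfr|hfr] := pselect (free_rank1 S (Ns i)).
    by have [d hd] := free_rank1_generator (decomposition_graded i) hfr; exists d.
  by exists 0; rewrite inE => /asboolP.
have [gen_of hgen] := choice gen.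
rewrite /nfree -/F cardE -(size_map gen_of); apply: perm_size; apply: uniq_perm => //.
  rewrite map_inj_in_uniq ?enum_uniq // => i j; rewrite !mem_enum => hi hj eij.
  have [hi1 _] := hgen i hi; have [hj1 _] := hgen j hj.
  by rewrite eij in hi1; apply: decomposition_unique hi1 hj1.
move=> v; apply/mapP/idP => [[i hi ->]|/hmons hv].
  by rewrite mem_enum in hi; have [hd hg] := hgen i hi; apply/hmons; apply: free_degree_of_generator hd hg.
have [i hi] := decomposition_cover hv.1.
have hF : i \in F.
  by rewrite inE; apply/asboolP; apply: free_rank1_of_free_degree (decomposition_indecomposable i) hi hv.
exists i; first by rewrite mem_enum.
have [hd hg] := hgen i hF; apply: shifted_antisym pointed _ (hg _ hi).
exact: indecomposable_free_degree_shifted (decomposition_indecomposable i) hi hv hd.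
Qed.

End Decomposition.

End GradedSubmodules.

Unset Implicit Arguments. Set Strict Implicit.

Theorem lemma3p8 (k : fieldType) (p e n : nat) (S : 'rV[int]_n -> Prop)
    (H : 'rV[rat]_n -> Prop) :
  p \in [pchar k] ->
  fg_monoid S ->
  (forall v, H v -> frac_lattice (p ^ e)%N S v) ->
  fg_module S H ->
  (forall v : 'rV[rat]_n, @free_summand_mono k n S H v <->
     (H v /\ forall l, gen_group S l -> ~ S l -> ~ H (v + toQ l))) /\
  ((forall s, S s -> S (- s) -> s = 0) ->
   exists mons : seq 'rV[rat]_n,
     [/\ uniq mons,
         (forall v, v \in mons <->
            (H v /\ forall l, gen_group S l -> ~ S l -> ~ H (v + toQ l))),
         (exists m (Ns : 'I_m -> ('rV[rat]_n -> k) -> Prop), @decomposition k n S H m Ns) &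
         (forall m (Ns : 'I_m -> ('rV[rat]_n -> k) -> Prop),
            @decomposition k n S H m Ns -> @nfree k n S m Ns = size mons)]).
Proof.
move=> _ [S0 SD _] _ [H_shift [hs hspec]].
split=> [v|pointed]; first exact: (free_summand_monoP k S0 SD H_shift).
pose mons := undup [seq h <- hs | `[< free_degree S H h >]].
have hmons v : v \in mons <-> free_degree S H v.
  rewrite mem_undup mem_filter; split => [/andP [/asboolP] //|hv].
  by rewrite (asboolT hv) (free_degree_mem_generators S0 pointed hspec hv).
exists mons; split => //; first exact: undup_uniq.
  exact: (exists_decomposition k S0 SD H_shift hspec).
by move=> m Ns dec; apply: (nfree_decomposition S0 SD H_shift dec pointed (undup_uniq _) hmons).
Qed.
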